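(* Let $(E_n)_{n\in\mathbb Z}$ be the integer sequence with $E_0=0$, $E_1=E_2=1$ and $E_n+E_{n+2}=E_{n+3}$ for all $n\in\mathbb Z$. For integers $n,i,j$ let $$\Delta_{n,n+i,n+i+j}=\det\begin{pmatrix}E_n & E_{n-1} & E_{n+1}\\ E_{n+i} & E_{n+i-1} & E_{n+i+1}\\ E_{n+i+j} & E_{n+i+j-1} & E_{n+i+j+1}\end{pmatrix}.$$ Then $\Delta_{n,n+i,n+i+j}$ does not depend on $n$, and for all $n,i,j\in\mathbb Z$, $$\Delta_{n,n+i,n+i+j}=E_iE_{i+j-1}-E_{i+j}E_{i-1}.$$ *)

From mathcomp Require Import all_boot all_order all_algebra.
Set Implicit Arguments. Unset Strict Implicit. Unset Printing Implicit Defensive.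
Import GRing.Theory Num.Theory.
Local Open Scope ring_scope.

Definition E_seq (E : int -> int) : Prop :=
  [/\ E 0 = 0, E 1 = 1, E 2 = 1 & forall n : int, E n + E (n + 2) = E (n + 3)].

Definition Delta (E : int -> int) (n i j : int) : int :=
  \det (\matrix_(r < 3, c < 3)
          let m := (if r == 0%N :> nat then n
                    else if r == 1%N :> nat then n + i else n + i + j) in
          (if c == 0%N :> nat then E m
           else if c == 1%N :> nat then E (m - 1) else E (m + 1))).

From mathcomp Require Import all_boot all_order all_algebra.
From mathcomp Require Import ring.
Import GRing.Theory Num.Theory.
Local Open Scope ring_scope.

(* Right multiplication by the companion matrix [shift_mx] of the recurrence
   sends each row (E m, E (m - 1), E (m + 1)) of the matrix defining [Delta] to
   the row at m + 1.  As [shift_mx] has determinant 1, [Delta E n i j] does not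
   change when n is shifted, hence is its value at n = 0.  There the first row
   is (E 0, E (-1), E 1) = (0, 0, 1), and expanding along it leaves the minor
   E i E (i + j - 1) - E (i + j) E (i - 1). *)

Lemma shift_invariant_const {T : Type} (f : int -> T) :
  (forall n, f (n + 1) = f n) -> forall n, f n = f 0.
Proof.
move=> f_inv; elim/int_ind => [//|k IHk|k IHk].
  by rewrite -IHk -(f_inv k) intS addrC.
by rewrite -IHk -(f_inv (- k.+1%:Z)) intS opprD addrAC addNr add0r.
Qed.

Definition shift_mx {R : pzRingType} : 'M[R]_3 :=
  \matrix_(r < 3, c < 3) (nth [::] [:: [:: 0; 1; 0]; [:: 0; 0; 1]; [:: 1; 0; 1]] r)`_c.

Lemma det_shift_mx (R : comPzRingType) : \det (shift_mx : 'M[R]_3) = 1.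
Proof.
rewrite (expand_det_row _ 0) !big_ord_recl big_ord0 /cofactor.
rewrite !(expand_det_row _ 0) !big_ord_recl !big_ord0 /cofactor !det_mx11 !mxE /=.
by rewrite /bump /=; ring.
Qed.

Section E_sequence.

Variable E : int -> int.
Hypothesis E_sequence : E_seq E.

Lemma E_rec m : E (m + 1 + 1) = E (m - 1) + E (m + 1).
Proof.
case: E_sequence => _ _ _ E_rec3.
rewrite (_ : m + 1 + 1 = m - 1 + 3); last ring.
by rewrite -E_rec3; congr (E _ + E _); ring.
Qed.

Lemma E_pred0 : E (-1) = 0.
Proof.
case: E_sequence => _ E1 E2 /(_ (-1)).
by rewrite (_ : -1 + 2 = 1) // (_ : -1 + 3 = 2) // E1 E2 -[X in _ = X]add0r => /addIr.
Qed.

Lemma Delta_succ n i j : Delta E (n + 1) i j = Delta E n i j.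
Proof.
rewrite /Delta -[RHS]mulr1 -[X in _ = _ * X](det_shift_mx int) -det_mulmx.
congr (\det _); apply/matrixP => r c.
rewrite !mxE !big_ord_recl big_ord0 !mxE /=.
set m := (if _ then n else _).
have -> : (if r == 0%N :> nat then n + 1
           else if r == 1%N :> nat then n + 1 + i else n + 1 + i + j) = m + 1.
  by rewrite /m; case: ifP => _; [|case: ifP => _]; ring.
by case: c => [[|[|[|//]]] _] /=; rewrite !(mulr0, mulr1, addr0, add0r) ?addrK ?E_rec.
Qed.

Lemma Delta_const n i j : Delta E n i j = Delta E 0 i j.
Proof. exact: (shift_invariant_const (fun n => Delta E n i j) (Delta_succ ^~ i ^~ j)). Qed.

Lemma Delta0 i j : Delta E 0 i j = E i * E (i + j - 1) - E (i + j) * E (i - 1).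
Proof.
case: E_sequence => E0 E1 _ _.
rewrite /Delta (expand_det_row _ 0) !big_ord_recl big_ord0 /cofactor !mxE /=.
rewrite sub0r add0r E0 E_pred0 E1 !mul0r !add0r mul1r.
rewrite (expand_det_row _ 0) !big_ord_recl big_ord0 /cofactor !det_mx11 !mxE /=.
by rewrite /bump /=; ring.
Qed.

End E_sequence.

Theorem theorem15 (E : int -> int) : E_seq E ->
  (forall n n' i j : int, Delta E n i j = Delta E n' i j) /\
  (forall n i j : int,
      Delta E n i j = E i * E (i + j - 1) - E (i + j) * E (i - 1)).
Proof.
move=> E_sequence; split => [n n' i j | n i j].
  by rewrite (Delta_const _ E_sequence n) (Delta_const _ E_sequence n').
by rewrite (Delta_const _ E_sequence) Delta0.
Qed.
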